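(* Let $p$ be an odd prime, $\xi$ a primitive $p$th root of unity, $0\neq n\in\mathbb Z$. Let $(\mathfrak a,a),(\mathfrak a,b)\in I$. Then $[\mathfrak a,a]=[\mathfrak a,b]$ if and only if $a/b\in N(\mathbb Z[1/n][\xi]^* )$.
   Context: $N(x)=x\overline x$ (bar = complex conjugation). $I$ is the set of pairs $(\mathfrak a,a)$ with $\mathfrak a\subseteq\mathbb Z[1/n][\xi]$ an ideal and $0\neq a\in\mathbb Z[1/n][\xi]$ with $\mathfrak a\overline{\mathfrak a}=(a)$; $[\mathfrak a,a]=[\mathfrak b,b]$ means there exist nonzero $\lambda,\mu\in\mathbb Z[1/n][\xi]$ with $\lambda\mathfrak a=\mu\mathfrak b$ and $\lambda\overline\lambda a=\mu\overline\mu b$. *)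

From mathcomp Require Import all_boot all_algebra all_field.
Set Implicit Arguments. Unset Strict Implicit. Unset Printing Implicit Defensive.
Import GRing.Theory Num.Theory.
Local Open Scope ring_scope.

(* Everything lives inside algC (algebraic complex numbers); x^* is complex
   conjugation.  Subsets of algC are predicates algC -> Prop. *)

Definition ZinvN (n : int) (x : algC) : Prop :=
  exists (z : int) (k : nat), x = z%:~R / (n%:~R) ^+ k.

Definition Rn (n : int) (xi : algC) (x : algC) : Prop :=
  exists (m : nat) (c : nat -> algC),
    (forall i, ZinvN n (c i)) /\ x = \sum_(i < m) c i * xi ^+ i.

Definition isIdeal (n : int) (xi : algC) (A : algC -> Prop) : Prop :=
  [/\ forall x, A x -> Rn n xi x,
      A 0,
      forall x y, A x -> A y -> A (x + y)
    & forall r x, Rn n xi r -> A x -> A (r * x)].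

Definition idealMul (A B : algC -> Prop) : algC -> Prop :=
  fun x => exists (m : nat) (u v : nat -> algC),
    [/\ forall i, A (u i), forall i, B (v i) & x = \sum_(i < m) u i * v i].

Definition idealConj (A : algC -> Prop) : algC -> Prop := fun x => A (x^*).

Definition principal (n : int) (xi : algC) (a : algC) : algC -> Prop :=
  fun x => exists r, Rn n xi r /\ x = r * a.

Definition scaleSet (l : algC) (A : algC -> Prop) : algC -> Prop :=
  fun x => exists y, A y /\ x = l * y.

Definition setEq (A B : algC -> Prop) : Prop := forall x, A x <-> B x.

Definition inI (n : int) (xi : algC) (A : algC -> Prop) (a : algC) : Prop :=
  [/\ isIdeal n xi A, Rn n xi a, a != 0
    & setEq (idealMul A (idealConj A)) (principal n xi a)].

Definition classEq (n : int) (xi : algC) (A : algC -> Prop) (a : algC)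
    (B : algC -> Prop) (b : algC) : Prop :=
  exists l mu : algC,
    [/\ Rn n xi l, Rn n xi mu, l != 0, mu != 0
      & setEq (scaleSet l A) (scaleSet mu B) /\ l * l^* * a = mu * mu^* * b].

Definition isUnitR (n : int) (xi : algC) (u : algC) : Prop :=
  Rn n xi u /\ exists v, Rn n xi v /\ u * v = 1.

Definition inNormUnits (n : int) (xi : algC) (x : algC) : Prop :=
  exists u, isUnitR n xi u /\ x = u * u^*.

From mathcomp Require Import all_boot all_algebra all_field.
From mathcomp Require Import ring.
From Stdlib Require Import IndefiniteDescription.
Set Implicit Arguments. Unset Strict Implicit. Unset Printing Implicit Defensive.
Import GRing.Theory Num.Theory.
Local Open Scope ring_scope.

(* If [l A = mu A] and [A * conj A = (a)] with [a <> 0], write [a] as a sum of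
   products [u_i v_i] with [u_i] in [A]; replacing each [l u_i] by [mu w_i]
   shows [l a] lies in [mu (a)], so [mu] divides [l] in [Z[1/n][xi]].  By
   symmetry [mu = l s] for a unit [s], and then [l l^* a = mu mu^* b] gives
   [a / b = s s^*].  Conversely, for [a / b = u u^*] take [l = 1] and [mu = u].
   None of this uses that [p] is an odd prime, [xi] a primitive root or
   [n <> 0]. *)

Section ScaledIdeals.

Variables (n : int) (xi : algC).

Lemma Rn1 : Rn n xi 1.
Proof.
exists 1%N, (fun=> 1); split; last by rewrite big_ord1 expr0 mulr1.
by move=> _; exists 1, 0%N; rewrite expr0 divr1.
Qed.

Lemma isUnitR_neq0 (u : algC) : isUnitR n xi u -> u != 0.
Proof.
by case=> _ [v [_ uv]]; apply: contra_eq_neq uv => ->; rewrite mul0r eq_sym oner_neq0.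
Qed.

Lemma idealMul_scale (A B : algC -> Prop) (l mu x : algC) :
  setEq (scaleSet l A) (scaleSet mu A) -> idealMul A B x ->
  exists y, idealMul A B y /\ l * x = mu * y.
Proof.
move=> lA_muA [m [u [v [Au Bv ->]]]].
have [w hw] : exists w : nat -> algC, forall i, A (w i) /\ l * u i = mu * w i.
  by apply: (functional_choice (fun i y => A y /\ l * u i = mu * y)) => i;
    apply/lA_muA; exists (u i).
exists (\sum_(i < m) w i * v i); split; first by exists m, w, v; split => // i; case: (hw i).
rewrite !mulr_sumr; apply: eq_bigr => i _.
by rewrite !mulrA (proj2 (hw i)).
Qed.

Lemma scaleSet_eq_dvd (A B : algC -> Prop) (a l mu : algC) :
  a != 0 -> setEq (idealMul A B) (principal n xi a) ->
  setEq (scaleSet l A) (scaleSet mu A) ->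
  exists r, Rn n xi r /\ l = mu * r.
Proof.
move=> a0 AB_a lA_muA.
have ABa : idealMul A B a by apply/AB_a; exists 1; rewrite mul1r; split; first exact: Rn1.
have [y [ABy la_muy]] := idealMul_scale lA_muA ABa.
have [r [Rr y_ra]] := (AB_a y).1 ABy.
exists r; split => //; apply: (mulIf a0).
by rewrite -mulrA -y_ra la_muy.
Qed.

Lemma scaleSet_eq_unit (A : algC -> Prop) (a l mu : algC) :
  inI n xi A a -> l != 0 -> setEq (scaleSet l A) (scaleSet mu A) ->
  exists s, isUnitR n xi s /\ mu = l * s.
Proof.
move=> [_ _ a0 AA_a] l0 lA_muA.
have muA_lA : setEq (scaleSet mu A) (scaleSet l A) by move=> x; split => /lA_muA.
have [r [Rr l_mur]] := scaleSet_eq_dvd a0 AA_a lA_muA.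
have [s [Rs mu_ls]] := scaleSet_eq_dvd a0 AA_a muA_lA.
exists s; split=> //; split=> //; exists r; split=> //.
by apply: (mulfI l0); rewrite mulr1 mulrA -mu_ls -l_mur.
Qed.

Lemma scaleSet_unit (A : algC -> Prop) (u : algC) :
  isIdeal n xi A -> isUnitR n xi u -> setEq (scaleSet 1 A) (scaleSet u A).
Proof.
move=> [_ _ _ ideal_mul] [Ru [v [Rv uv]]] x; split.
  by case=> y [Ay ->]; exists (v * y); rewrite mulrA uv; split; first exact: ideal_mul.
by case=> y [Ay ->]; exists (u * y); rewrite mul1r; split; first exact: ideal_mul.
Qed.

End ScaledIdeals.

Theorem lemma3p9 (p : nat) (xi : algC) (n : int) (A : algC -> Prop) (a b : algC) :
  prime p -> odd p -> p.-primitive_root xi -> n != 0 ->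
  inI n xi A a -> inI n xi A b ->
  (classEq n xi A a A b <-> inNormUnits n xi (a / b)).
Proof.
move=> _ _ _ _ Aa [A_ideal _ b0 _]; split.
  move=> [l [mu [_ _ l0 _ [lA_muA norm_eq]]]].
  have [s [s_unit mu_ls]] := scaleSet_eq_unit Aa l0 lA_muA.
  exists s; split => //; apply: (mulIf b0); rewrite divfK //.
  have ll0 : l * l^* != 0 by rewrite mulf_neq0 // conjC_eq0.
  by apply: (mulfI ll0); rewrite norm_eq mu_ls rmorphM /=; ring.
move=> [u [u_unit ab_uu]].
exists 1, u; split; [exact: Rn1 | exact: (proj1 u_unit) | exact: oner_neq0
  | exact: isUnitR_neq0 u_unit | split; first exact: scaleSet_unit A_ideal u_unit].
by rewrite rmorph1 !mul1r -ab_uu divfK.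
Qed.
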